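(* For any finite families $(a_i)_{i\in I}$, $(a'_i)_{i\in I}$, $(b_j)_{j\in J}$ in $L$: (i) for every computation rule $\langle\cdot\rangle$, $\bigwedge_{i\in I}a_i\le\langle\bigoplus_{i\in I}a_i\rangle\le\bigvee_{i\in I}a_i$; (ii) the splitting rule $\langle\cdot\rangle^+_-$ and the strong rule $\langle\cdot\rangle_0$ are isotone: if $a_i\le a'_i$ for all $i\in I$, then $\langle\bigoplus_{i\in I}a_i\rangle\le\langle\bigoplus_{i\in I}a'_i\rangle$; (iii) for the splitting rule, either $|\langle(\bigoplus_{i\in I}a_i)\oplus(\bigoplus_{j\in J}b_j)\rangle^+_-|\ge|\langle\bigoplus_{i\in I}a_i\rangle^+_-|$ or $\langle(\bigoplus_{i\in I}a_i)\oplus(\bigoplus_{j\in J}b_j)\rangle^+_-=\mathbb{O}$, where the left-hand expression denotes the rule applied to the concatenated family of all $a_i$ and $b_j$.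
   Context: Let $(L^+,\le)$ be a totally ordered set with bottom $\mathbb{O}$ and top $\mathbb{1}$. Let $L^-=\{-a:a\in L^+\}$ be a disjoint copy with reversed order, $L=L^+\cup L^-$ with $-\mathbb{O}=\mathbb{O}$, totally ordered with $L^-$ below $L^+$; $-(-a)=a$; $|a|=a$ on $L^+$, $|a|=-a$ on $L^-$. Symmetric maximum: $a\oplus b=\mathbb{O}$ if $b=-a$, otherwise the one of $a,b$ with larger absolute value. A finite family $(a_i)_{i\in I}$ fulfills associativity if $|I|\le2$ or $\bigvee_i a_i\ne-\bigwedge_i a_i$; then $\bigoplus_{i\in I}a_i$ is independent of parenthesization (empty $\oplus$ is $\mathbb{O}$). A computation rule $\langle\cdot\rangle$ assigns to every finite family a set $J\subseteq I$ of deleted indices such that $(a_i)_{i\in I\setminus J}$ fulfills associativity and such that the deletion is the result of a suitable arrangement of parentheses in $\bigoplus_{i\in I}a_i$; $\langle\bigoplus_{i\in I}a_i\rangle:=\bigoplus_{i\in I\setminus J}a_i$. Splitting rule: deletes nothing if the family fulfills associativity, everything otherwise (equivalently, its value is $(\bigvee_{a_i\ge\mathbb{O}}a_i)\oplus(\bigwedge_{a_i<\mathbb{O}}a_i)$, empty sup/inf being $\mathbb{O}$). Strong rule: repeatedly deletes one occurrence of $a$ and one of $-a$, where $a=\bigvee a_i=-\bigwedge a_i$ in the current family, until associativity holds. *)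

From mathcomp Require Import all_boot all_order.
Set Implicit Arguments. Unset Strict Implicit. Unset Printing Implicit Defensive.
Import Order.TTheory.

Section SymMax.
Variables (d : Order.disp_t) (T : tbOrderType d).

(* L = L^+ U L^- : a pair (negative?, absolute value) with the invariant that
   a negative element has nonzero absolute value, so that -O = O. *)
Definition symL := {p : bool * T | p.1 ==> (p.2 != Order.bottom)}.

Lemma mkL_proof (s : bool) (t : T) :
  (s && (t != Order.bottom)) ==> (t != Order.bottom).
Proof. by case: s; case: (t != Order.bottom). Qed.

Definition mkL (s : bool) (t : T) : symL :=
  exist (fun p : bool * T => p.1 ==> (p.2 != Order.bottom))
        (s && (t != Order.bottom), t) (mkL_proof s t).

Definition sgnL (x : symL) : bool := (sval x).1.
Definition absL (x : symL) : T := (sval x).2.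

Definition zeroL : symL := mkL false Order.bottom.
Definition oppL (x : symL) : symL := mkL (~~ sgnL x) (absL x).

Definition leL (x y : symL) : bool :=
  match sgnL x, sgnL y with
  | false, false => (absL x <= absL y)%O
  | true, false => true
  | false, true => false
  | true, true => (absL y <= absL x)%O
  end.

Definition maxL (x y : symL) : symL := if leL x y then y else x.
Definition minL (x y : symL) : symL := if leL x y then x else y.

(* supremum / infimum of a finite family (list); empty sup/inf = O *)
Definition supL (s : seq symL) : symL :=
  match s with [::] => zeroL | x :: s' => foldr maxL x s' end.
Definition infL (s : seq symL) : symL :=
  match s with [::] => zeroL | x :: s' => foldr minL x s' end.

Definition symmax (a b : symL) : symL :=
  if b == oppL a then zeroL else if (absL a < absL b)%O then b else a.

Definition assocL (s : seq symL) : bool :=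
  (size s <= 2) || (supL s != oppL (infL s)).

(* iterated symmetric maximum (meaningful for associative families) *)
Definition bigsym (s : seq symL) : symL := foldr symmax zeroL s.

(* the value <+_{i in I} a_i> of a rule deleting the indices J *)
Definition rule_val (I : finType) (J : {set I}) (a : I -> symL) : symL :=
  bigsym (map a (enum (~: J))).

(* arrangements of parentheses: binary trees whose leaves are the indices *)
Inductive ptree (I : Type) := PLeaf of I | PNode of ptree I & ptree I.

Fixpoint leaves (I : Type) (t : ptree I) : seq I :=
  match t with PLeaf i => [:: i] | PNode l r => leaves l ++ leaves r end.

Fixpoint evalt (I : Type) (a : I -> symL) (t : ptree I) : symL :=
  match t with
  | PLeaf i => a i
  | PNode l r => symmax (evalt a l) (evalt a r)
  end.

(* indices not deleted by evaluating the tree: a node x (+) y with y = -x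
   deletes all indices below it *)
Fixpoint keptt (I : Type) (a : I -> symL) (t : ptree I) : seq I :=
  match t with
  | PLeaf i => [:: i]
  | PNode l r =>
      if evalt a r == oppL (evalt a l) then [::] else keptt a l ++ keptt a r
  end.

Definition is_comp_rule (rule : forall I : finType, (I -> symL) -> {set I}) :
  Prop :=
  forall (I : finType) (a : I -> symL),
    assocL (map a (enum (~: rule I a))) /\
    (#|I| = 0 \/
     exists t : ptree I,
       perm_eq (leaves t) (enum I) /\ rule I a = ~: [set i in keptt a t]).

Definition split_rule (I : finType) (a : I -> symL) : {set I} :=
  if assocL (map a (enum I)) then set0 else setT.

Definition strong_step (I : finType) (a : I -> symL) (K : {set I}) : {set I} :=
  let s := map a (enum K) in
  if assocL s then K else
  let m := supL s in
  match [pick i in K | a i == m] with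
  | Some i =>
      match [pick j in K | (j != i) && (a j == oppL m)] with
      | Some j => K :\ i :\ j
      | None => K
      end
  | None => K
  end.

Definition strong_rule (I : finType) (a : I -> symL) : {set I} :=
  ~: iter #|I| (strong_step a) setT.

Definition catfam (I J : finType) (a : I -> symL) (b : J -> symL)
  (x : I + J) : symL :=
  match x with inl i => a i | inr j => b j end.

End SymMax.

(* For (i), x (+) y is either x, y, or O with y = -x, and in the last case O lies
   between x and y; so every parenthesization stays between the smallest and the
   largest entry.  For the splitting rule the value is explicit: with M the largest
   absolute value, it is O if both M and -M occur and otherwise the one of them that
   occurs; (ii) and (iii) for it are read off from this formula.  For the strong rule,
   record the family by its balance t |-> #{i | a_i = t} - #{i | a_i = -t} for t > O.
   Cancelling a pair a, -a preserves the balance, and an associative family sums to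
   the signed "leading term" of its balance (the sign at the largest t where it does
   not vanish), so this leading term is the value of the strong rule.  Raising one
   entry raises the balance lexicographically from the top, hence its leading term. *)

From mathcomp Require Import all_boot all_order all_algebra zify.
Set Implicit Arguments. Unset Strict Implicit. Unset Printing Implicit Defensive.
Import Order.TTheory GRing.Theory Num.Theory.

Section SymmetricMaximum.
Variables (d : Order.disp_t) (T : tbOrderType d).
Local Notation L := (symL T).
Local Notation bot := (@Order.bottom _ T).
Local Notation zero := (zeroL T).
Local Open Scope order_scope.

(** * Order and symmetric maximum on L *)

Definition posL (t : T) : L := mkL false t.
Definition negL (t : T) : L := mkL true t.

Lemma sgnL_mkL s (t : T) : sgnL (mkL s t) = s && (t != bot). Proof. by []. Qed.
Lemma absL_mkL s (t : T) : absL (mkL s t) = t. Proof. by []. Qed.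
Lemma sgnL0 : sgnL zero = false. Proof. by []. Qed.
Lemma absL0 : absL zero = bot. Proof. by []. Qed.
Lemma sgnL_opp (x : L) : sgnL (oppL x) = ~~ sgnL x && (absL x != bot).
Proof. by []. Qed.
Lemma absL_opp (x : L) : absL (oppL x) = absL x. Proof. by []. Qed.

Lemma sgnL_absL_neq0 (x : L) : sgnL x -> absL x != bot.
Proof. by case: x => [[[] t] /= h]. Qed.

Lemma eq_symL (x y : L) : sgnL x = sgnL y -> absL x = absL y -> x = y.
Proof.
case: x => [[s t] h]; case: y => [[s' t'] h']; rewrite /sgnL /absL /= => e1 e2.
by subst; congr exist; exact: bool_irrelevance.
Qed.

Lemma absL_eq0 (x : L) : absL x = bot -> x = zero.
Proof.
move=> x0; apply: eq_symL => //; rewrite sgnL0.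
by apply/negP => /sgnL_absL_neq0; rewrite x0 eqxx.
Qed.

Lemma oppLK (x : L) : oppL (oppL x) = x.
Proof.
have [/absL_eq0 -> | x0] := eqVneq (absL x) bot; first exact: absL_eq0.
by apply: eq_symL => //; rewrite !sgnL_opp absL_opp x0 !andbT negbK.
Qed.

Lemma oppL0 : oppL zero = zero. Proof. exact: absL_eq0. Qed.
Lemma oppL_pos (t : T) : oppL (posL t) = negL t. Proof. exact: eq_symL. Qed.
Lemma oppL_neg (t : T) : oppL (negL t) = posL t.
Proof. by rewrite -oppL_pos oppLK. Qed.

Lemma posL_neq_negL (t : T) : t != bot -> posL t != negL t.
Proof. by move=> t0; apply/eqP => /(congr1 (@sgnL _ T)); rewrite !sgnL_mkL t0. Qed.

Lemma eq_oppL (x m : L) : absL m != bot -> absL x = absL m -> x != m -> x = oppL m.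
Proof.
move=> m0 xm x_neq; apply: eq_symL; last by rewrite absL_opp.
rewrite sgnL_opp m0 andbT; apply: contraTeq x_neq => sx.
by rewrite negbK; apply/eqP/eq_symL => //; case: (sgnL x) (sgnL m) sx => [] [].
Qed.

Lemma leL_refl (x : L) : leL x x.
Proof. by rewrite /leL; case: (sgnL x). Qed.

Lemma leL_trans (y x z : L) : leL x y -> leL y z -> leL x z.
Proof.
rewrite /leL; case: (sgnL x); case: (sgnL y); case: (sgnL z) => // h1 h2;
[exact: le_trans h2 h1 | exact: le_trans h1 h2].
Qed.

Lemma leL_total (x y : L) : leL x y || leL y x.
Proof. by rewrite /leL; case: (sgnL x); case: (sgnL y) => //; apply: le_total. Qed.

Lemma leL_anti (x y : L) : leL x y -> leL y x -> x = y.
Proof.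
rewrite /leL; case sx: (sgnL x); case sy: (sgnL y) => // h1 h2;
by apply: eq_symL; rewrite ?sx ?sy //; apply/le_anti; rewrite h1 h2.
Qed.

Lemma posL_leL (t : T) (y : L) : leL (posL t) y -> ~~ sgnL y /\ t <= absL y.
Proof. by rewrite /leL sgnL_mkL /=; case: (sgnL y). Qed.

Lemma leL_negL (t : T) (y : L) : t != bot -> leL y (negL t) -> sgnL y /\ t <= absL y.
Proof. by move=> t0; rewrite /leL sgnL_mkL t0 /=; case: (sgnL y). Qed.

Lemma leL_posL (x : L) (t : T) : absL x <= t -> leL x (posL t).
Proof. by rewrite /leL sgnL_mkL /=; case: (sgnL x). Qed.

Lemma negL_leL (x : L) (t : T) : absL x <= t -> leL (negL t) x.
Proof.
have [-> | t0 xt] := eqVneq t bot.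
  by rewrite lex0 => /eqP/absL_eq0 ->; rewrite /leL sgnL_mkL eqxx /= lexx.
by rewrite /leL sgnL_mkL t0; case: (sgnL x).
Qed.

Lemma leL0_posL (t : T) : leL zero (posL t).
Proof. by apply: leL_posL; rewrite le0x. Qed.

Lemma negL_leL0 (t : T) : leL (negL t) zero.
Proof. by apply: negL_leL; rewrite le0x. Qed.

Lemma zero_in_opp (lo hi x : L) :
  leL lo x && leL x hi -> leL lo (oppL x) && leL (oppL x) hi ->
  leL lo zero && leL zero hi.
Proof.
move=> /andP[lo_x x_hi] /andP[lo_ox ox_hi].
have : (leL x zero && leL zero (oppL x)) || (leL (oppL x) zero && leL zero x).
  rewrite /leL sgnL_opp absL_opp sgnL0 absL0.
  by case: (sgnL x) => /=; [rewrite le0x | case: eqVneq => [->|_]; rewrite ?lexx ?le0x ?orbT].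
case/orP=> /andP[u v].
  by rewrite (leL_trans lo_x u) (leL_trans v ox_hi).
by rewrite (leL_trans lo_ox u) (leL_trans v x_hi).
Qed.

Lemma mkL_sgn_abs (x : L) : mkL (sgnL x) (absL x) = x.
Proof.
apply: eq_symL => //; rewrite sgnL_mkL.
by case: (boolP (sgnL x)) => // /sgnL_absL_neq0 ->.
Qed.

Lemma posL_or_negL (x : L) : x = posL (absL x) \/ x = negL (absL x).
Proof.
by move: (mkL_sgn_abs x); set t := absL x; case: (sgnL x) => <-; [right | left].
Qed.

Lemma symmaxP (x y : L) :
  [\/ symmax x y = x, symmax x y = y | symmax x y = zero /\ y = oppL x].
Proof.
rewrite /symmax; case: eqP => [?|_]; first by constructor 3.
by case: ifP; [constructor 2 | constructor 1].
Qed.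

Lemma symmaxx0 (x : L) : symmax x zero = x.
Proof.
rewrite /symmax absL0 ltx0; case: eqP => // /(congr1 (@oppL _ T)).
by rewrite oppLK oppL0.
Qed.

Lemma symmax_in (lo hi x y : L) :
  leL lo x && leL x hi -> leL lo y && leL y hi ->
  leL lo (symmax x y) && leL (symmax x y) hi.
Proof.
move=> x_in y_in; have [-> | -> | [-> yE]] := symmaxP x y => //.
by apply: zero_in_opp x_in _; rewrite -yE.
Qed.

Lemma bigsym_cons (x : L) s : bigsym (x :: s) = symmax x (bigsym s).
Proof. by []. Qed.

Lemma bigsym_in (lo hi : L) (s : seq L) :
  (forall x, x \in s -> leL lo x && leL x hi) ->
  s != [::] \/ leL lo zero && leL zero hi ->
  leL lo (bigsym s) && leL (bigsym s) hi.
Proof.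
elim: s => [_ [] // | x [|y s] IH] s_in _; first by rewrite /= symmaxx0 s_in ?mem_head.
apply: symmax_in; first by rewrite s_in ?mem_head.
by apply: IH; [move=> z z_s; apply: s_in; rewrite inE z_s orbT | left].
Qed.

Lemma bigsym_mem (s : seq L) : bigsym s = zero \/ bigsym s \in s.
Proof.
elim: s => [|x s IH]; first by left.
rewrite bigsym_cons; have [-> | -> | [-> _]] := symmaxP x (bigsym s).
- by right; rewrite mem_head.
- by case: IH => [-> | IH]; [left | right; rewrite inE IH orbT].
- by left.
Qed.

Lemma maxL_ub (x y : L) : leL x (maxL x y) && leL y (maxL x y).
Proof.
rewrite /maxL; case: ifP => h; first by rewrite h leL_refl.
by rewrite leL_refl; move: (leL_total x y); rewrite h.
Qed.

Lemma minL_lb (x y : L) : leL (minL x y) x && leL (minL x y) y.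
Proof.
rewrite /minL; case: ifP => h; first by rewrite h leL_refl.
by rewrite leL_refl andbT; move: (leL_total x y); rewrite h.
Qed.

Lemma foldr_maxL (x0 : L) s : foldr (@maxL _ T) x0 s \in x0 :: s /\
  (forall y, y \in x0 :: s -> leL y (foldr (@maxL _ T) x0 s)).
Proof.
elim: s => [|x s [IHmem IHub]] /=.
  by split; [rewrite mem_head | move=> y; rewrite inE => /eqP ->; apply: leL_refl].
have /andP[ub_x ub_m] := maxL_ub x (foldr (@maxL _ T) x0 s).
split.
  rewrite /maxL; case: ifP => _; last by rewrite !inE eqxx orbT.
  by move: IHmem; rewrite !inE => /orP[] ->; rewrite ?orbT.
move=> y; rewrite !inE => /or3P[/eqP-> | /eqP-> | y_s] //.
- exact: leL_trans (IHub _ (mem_head _ _)) ub_m.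
- by apply: leL_trans (IHub _ _) ub_m; rewrite inE y_s orbT.
Qed.

Lemma foldr_minL (x0 : L) s : foldr (@minL _ T) x0 s \in x0 :: s /\
  (forall y, y \in x0 :: s -> leL (foldr (@minL _ T) x0 s) y).
Proof.
elim: s => [|x s [IHmem IHlb]] /=.
  by split; [rewrite mem_head | move=> y; rewrite inE => /eqP ->; apply: leL_refl].
have /andP[lb_x lb_m] := minL_lb x (foldr (@minL _ T) x0 s).
split.
  rewrite /minL; case: ifP => _; first by rewrite !inE eqxx orbT.
  by move: IHmem; rewrite !inE => /orP[] ->; rewrite ?orbT.
move=> y; rewrite !inE => /or3P[/eqP-> | /eqP-> | y_s] //.
- exact: leL_trans lb_m (IHlb _ (mem_head _ _)).
- by apply: leL_trans lb_m (IHlb _ _); rewrite inE y_s orbT.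
Qed.

Lemma supL_mem (s : seq L) : s != [::] -> supL s \in s.
Proof. by case: s => // x s _; case: (foldr_maxL x s). Qed.

Lemma supL_ub (s : seq L) x : x \in s -> leL x (supL s).
Proof. by case: s => // y s; case: (foldr_maxL y s) => _; apply. Qed.

Lemma infL_mem (s : seq L) : s != [::] -> infL s \in s.
Proof. by case: s => // x s _; case: (foldr_minL x s). Qed.

Lemma infL_lb (s : seq L) x : x \in s -> leL (infL s) x.
Proof. by case: s => // y s; case: (foldr_minL y s) => _; apply. Qed.

(** * The splitting rule *)

Definition maxabsL (s : seq L) : T := \big[Order.max/bot]_(x <- s) absL x.

Lemma maxabsL_ub (s : seq L) x : x \in s -> absL x <= maxabsL s.
Proof. by move=> x_s; apply: le_bigmax_seq. Qed.

Lemma maxabsL_eq0 (s : seq L) x : maxabsL s = bot -> x \in s -> x = zero.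
Proof. by move=> s0 /maxabsL_ub; rewrite s0 lex0 => /eqP/absL_eq0. Qed.

Lemma maxabsL_attained (s : seq L) :
  maxabsL s != bot -> exists2 x, x \in s & absL x = maxabsL s.
Proof.
elim: s => [|y s IH]; first by rewrite /maxabsL big_nil eqxx.
rewrite /maxabsL big_cons -/(maxabsL s) /Order.max; case: ltP => _.
  by move=> /IH[x x_s <-]; exists x; rewrite // inE x_s orbT.
by exists y; rewrite ?mem_head.
Qed.

Lemma maxabsL_signed_mem (s : seq L) (t := maxabsL s) :
  t != bot -> (posL t \in s) || (negL t \in s).
Proof.
move=> t0; have [x x_s xt] := maxabsL_attained t0.
have [<- | x_neq] := eqVneq x (posL t); first by rewrite x_s.
by rewrite -oppL_pos -(@eq_oppL x (posL t) t0 xt x_neq) x_s orbT.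
Qed.

Lemma symmax_absL_lt (x y : L) : y != oppL x -> absL x < absL y -> symmax x y = y.
Proof. by rewrite /symmax => /negPf -> ->. Qed.

Lemma symmax_absL_le (x y : L) : y != oppL x -> absL y <= absL x -> symmax x y = x.
Proof. by rewrite /symmax ltNge => /negPf -> ->. Qed.

Definition dominant (s : seq L) (m : L) : bool :=
  [&& absL m != bot, all (fun x => absL x <= absL m) s, m \in s & oppL m \notin s].

Lemma bigsym_dominant (s : seq L) m : dominant s m -> bigsym s = m.
Proof.
elim: s => [/and4P[] // | x s IH /and4P[m0 /andP[xm s_le] m_xs opp_xs]].
rewrite inE negb_or eq_sym in opp_xs; case/andP: opp_xs => x_opp opp_s.
rewrite bigsym_cons; have [{x_opp xm}-> | x_neq] := eqVneq x m.
  apply: symmax_absL_le; last first.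
    by case: (bigsym_mem s) => [-> | /(allP s_le)//]; rewrite absL0 le0x.
  case: (bigsym_mem s) => [-> | b_s]; last by apply: contraNneq opp_s => <-.
  by apply: contra m0 => /eqP/(congr1 (@absL _ T)); rewrite absL0 absL_opp => <-.
have m_s : m \in s by move: m_xs; rewrite inE eq_sym (negPf x_neq).
rewrite IH; last by apply/and4P; split.
apply: symmax_absL_lt.
  by apply: contra x_opp => /eqP ->; rewrite oppLK.
rewrite lt_neqAle xm andbT; apply: contra x_opp => /eqP xM.
by rewrite (eq_oppL _ xM x_neq).
Qed.

Lemma supL_posL (s : seq L) (t : T) :
  all (fun x => absL x <= t) s -> posL t \in s -> supL s = posL t.
Proof.
move=> s_le t_s; apply: leL_anti; last exact: supL_ub.
have s0 : s != [::] by apply: contraTneq t_s => ->.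
by apply: leL_posL; apply: (allP s_le); apply: supL_mem.
Qed.

Lemma infL_negL (s : seq L) (t : T) :
  all (fun x => absL x <= t) s -> negL t \in s -> infL s = negL t.
Proof.
move=> s_le t_s; apply: leL_anti; first exact: infL_lb.
have s0 : s != [::] by apply: contraTneq t_s => ->.
by apply: negL_leL; apply: (allP s_le); apply: infL_mem.
Qed.

Lemma assocL_dominant (s : seq L) m : dominant s m -> assocL s.
Proof.
case/and4P=> _ s_le m_s opp_s; apply/orP; right; apply: contra opp_s => /eqP sup_inf.
have s0 : s != [::] by apply: contraTneq m_s => ->.
case: (posL_or_negL m) => m_eq; rewrite m_eq in m_s *.
  by rewrite -(supL_posL s_le m_s) sup_inf oppLK infL_mem.
by rewrite -(infL_negL s_le m_s) -sup_inf supL_mem.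
Qed.

Lemma assocL_balanced (s : seq L) (t : T) : t != bot ->
  all (fun x => absL x <= t) s -> posL t \in s -> negL t \in s -> assocL s ->
  exists x, s = [:: x; oppL x].
Proof.
move=> t0 s_le pos_s neg_s.
rewrite /assocL (supL_posL s_le pos_s) (infL_negL s_le neg_s) oppL_neg eqxx orbF.
have pos_neg := posL_neq_negL t0.
case: s {s_le} pos_s neg_s => [|x [|y [|z s]]] // pos_s neg_s _.
  by move: pos_s neg_s pos_neg; rewrite !inE => /eqP <- /eqP ->; rewrite eqxx.
move: pos_s neg_s; rewrite !inE => /orP[] /eqP <- /orP[] /eqP e;
  rewrite -?e ?eqxx // in pos_neg.
- by exists (posL t); rewrite -e oppL_pos.
- by exists (negL t); rewrite -e oppL_neg.
Qed.

Definition split_value (s : seq L) : L :=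
  let t := maxabsL s in
  if t == bot then zero
  else if posL t \in s then (if negL t \in s then zero else posL t) else negL t.

Lemma maxabsL_all (s : seq L) : all (fun x => absL x <= maxabsL s) s.
Proof. by apply/allP => x; apply: maxabsL_ub. Qed.

Lemma dominant_posL (s : seq L) (t := maxabsL s) :
  t != bot -> posL t \in s -> negL t \notin s -> dominant s (posL t).
Proof. by move=> t0 pos_s neg_s; rewrite /dominant t0 maxabsL_all pos_s oppL_pos. Qed.

Lemma dominant_negL (s : seq L) (t := maxabsL s) :
  t != bot -> negL t \in s -> posL t \notin s -> dominant s (negL t).
Proof. by move=> t0 neg_s pos_s; rewrite /dominant t0 maxabsL_all neg_s oppL_neg. Qed.

Lemma split_valueE (s : seq L) :
  (if assocL s then bigsym s else zero) = split_value s.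
Proof.
rewrite /split_value; set t := maxabsL s.
have [t0 | t0] := eqVneq t bot.
  by case: ifP => // _; case: (bigsym_mem s) => // /(maxabsL_eq0 t0).
case pos_s: (posL t \in s); case neg_s: (negL t \in s).
- case: ifP => // /(assocL_balanced t0 (maxabsL_all s) pos_s neg_s) [x ->].
  by rewrite !bigsym_cons symmaxx0 /symmax eqxx.
- have dom := dominant_posL t0 pos_s (negbT neg_s).
  by rewrite (assocL_dominant dom) (bigsym_dominant dom).
- have dom := dominant_negL t0 neg_s (negbT pos_s).
  by rewrite (assocL_dominant dom) (bigsym_dominant dom).
- by move: (maxabsL_signed_mem t0); rewrite -/t pos_s neg_s.
Qed.

Lemma absL_split_value_le (s : seq L) : absL (split_value s) <= maxabsL s.
Proof. by rewrite /split_value; do !case: ifP => _; rewrite ?absL0 ?le0x. Qed.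

Lemma absL_split_value (s : seq L) :
  split_value s != zero -> absL (split_value s) = maxabsL s.
Proof. by rewrite /split_value; do !case: ifP => _; rewrite ?eqxx. Qed.

Lemma eq_posL (x : L) (t : T) : ~~ sgnL x -> absL x = t -> x = posL t.
Proof. by move=> /negPf sx xt; apply: eq_symL; rewrite // sgnL_mkL sx. Qed.

Lemma eq_negL (x : L) (t : T) : sgnL x -> absL x = t -> x = negL t.
Proof.
by move=> sx xt; apply: eq_symL; rewrite // sgnL_mkL -xt sx (sgnL_absL_neq0 sx).
Qed.

Section Families.
Variables (I : finType) (a a' : I -> L).
Hypothesis le_a : forall i, leL (a i) (a' i).
Local Notation s := (map a (enum I)).
Local Notation s' := (map a' (enum I)).
Local Notation t := (maxabsL s).
Local Notation t' := (maxabsL s').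

Lemma mem_family (f : I -> L) i : f i \in map f (enum I).
Proof. by rewrite map_f ?mem_enum. Qed.

Lemma maxabsL_posL_mono :
  t != bot -> posL t \in s -> negL t \notin s -> t <= t' /\ negL t' \notin s'.
Proof.
move=> t0 /mapP[i _ ai] neg_s.
have /posL_leL[_ le_t] : leL (posL t) (a' i) by rewrite ai.
have le_tt' := le_trans le_t (maxabsL_ub (mem_family a' i)).
split=> //; apply: contra neg_s => /mapP[j _ aj].
have t'0 : t' != bot by rewrite -lt0x (lt_le_trans _ le_tt') ?lt0x.
have /(leL_negL t'0)[sj le_t'] : leL (a j) (negL t') by rewrite aj.
rewrite -(eq_negL sj (_ : absL (a j) = t)) ?mem_family //.
by apply/le_anti; rewrite maxabsL_ub ?mem_family // (le_trans le_tt').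
Qed.

Lemma maxabsL_negL_mono :
  t' != bot -> negL t' \in s' -> posL t' \notin s' -> t' <= t /\ posL t \notin s.
Proof.
move=> t'0 /mapP[j _ aj] pos_s'.
have /(leL_negL t'0)[_ le_t'] : leL (a j) (negL t') by rewrite aj.
have le_t't := le_trans le_t' (maxabsL_ub (mem_family a j)).
split=> //; apply: contra pos_s' => /mapP[i _ ai].
have /posL_leL[si le_t] : leL (posL t) (a' i) by rewrite ai.
rewrite -(eq_posL si (_ : absL (a' i) = t')) ?mem_family //.
by apply/le_anti; rewrite maxabsL_ub ?mem_family // (le_trans le_t't).
Qed.

Lemma split_value_mono : leL (split_value s) (split_value s').
Proof.
have [w_ge0 | w_lt0] := boolP (leL zero (split_value s')).
  rewrite {1}/split_value; have [// | t0] := eqVneq t bot.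
  case: ifP => pos_s; last exact: leL_trans (negL_leL0 _) w_ge0.
  case: ifP => neg_s //; have [le_tt' neg_s'] := maxabsL_posL_mono t0 pos_s (negbT neg_s).
  have t'0 : t' != bot by rewrite -lt0x (lt_le_trans _ le_tt') ?lt0x.
  have pos_s' := maxabsL_signed_mem t'0; rewrite (negPf neg_s') orbF in pos_s'.
  by rewrite /split_value (negPf t'0) pos_s' (negPf neg_s'); apply: leL_posL.
move: w_lt0; rewrite /split_value; have [_ | t'0] := eqVneq t' bot; first by rewrite leL_refl.
case: ifP => pos_s'; first by case: ifP; rewrite ?leL_refl ?leL0_posL.
move=> _; have neg_s' := maxabsL_signed_mem t'0; rewrite pos_s' /= in neg_s'.
have [le_t't pos_s] := maxabsL_negL_mono t'0 neg_s' (negbT pos_s').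
have t0 : t != bot by rewrite -lt0x (lt_le_trans _ le_t't) ?lt0x.
by rewrite (negPf t0) (negPf pos_s); apply: negL_leL.
Qed.

End Families.

(** * Balances and their leading terms *)

Definition charge (x : L) (t : T) : int :=
  if (t != bot) && (absL x == t) then (if sgnL x then -1 else 1)%R else 0%R.

Definition balance (s : seq L) (t : T) : int := (\sum_(x <- s) charge x t)%R.

Definition leads (D : T -> int) (v : L) : Prop :=
  (forall t, absL v < t -> D t = 0%R) /\
  (absL v != bot -> if sgnL v then (D (absL v) < 0)%R else (0 < D (absL v))%R).

Lemma charge_neq (x : L) t : absL x != t -> charge x t = 0%R.
Proof. by move=> /negPf xt; rewrite /charge xt andbF. Qed.

Lemma charge_absL (x : L) :
  absL x != bot -> charge x (absL x) = (if sgnL x then -1 else 1)%R.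
Proof. by move=> x0; rewrite /charge x0 eqxx. Qed.

Lemma charge0 t : charge zero t = 0%R.
Proof. by rewrite /charge absL0 eq_sym andNb. Qed.

Lemma chargeN (x : L) t : (charge x t + charge (oppL x) t = 0)%R.
Proof.
rewrite /charge absL_opp sgnL_opp; case: ifP => // /andP[t0 /eqP xt].
by rewrite xt t0; case: (sgnL x).
Qed.

Lemma leads_unique (D : T -> int) v w : leads D v -> leads D w -> v = w.
Proof.
wlog le_vw : v w / absL v <= absL w => [hwlog lv lw | [v_top v_sgn] [w_top w_sgn]].
  by case/orP: (le_total (absL v) (absL w)) => h; [|symmetry]; apply: hwlog.
have vw : absL v = absL w.
  apply/le_anti; rewrite le_vw leNgt; apply/negP => lt_vw.
  have w0 : absL w != bot by rewrite gt_eqF // (le_lt_trans (le0x _) lt_vw).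
  by move: (w_sgn w0); rewrite v_top //; case: (sgnL w); rewrite ltxx.
have [w0 | w0] := eqVneq (absL w) bot; first by rewrite (absL_eq0 w0) (absL_eq0 (etrans vw w0)).
apply: eq_symL => //; move: (w_sgn w0); rewrite -vw in w0 *; move: (v_sgn w0).
by case: (sgnL v); case: (sgnL w) => // hv hw; move: (lt_trans hv hw); rewrite ltxx.
Qed.

Lemma eq_leads (D D' : T -> int) v : D =1 D' -> leads D v -> leads D' v.
Proof. by move=> DD' [top sgn]; split=> [t /top|]; rewrite -!DD'. Qed.

Lemma leads_posL (D : T -> int) t0 : t0 != bot -> (0 < D t0)%R ->
  (forall t, t0 < t -> D t = 0%R) -> leads D (posL t0).
Proof. by move=> t00 pos top; split=> //; rewrite sgnL_mkL. Qed.

Lemma leads_absL_le (D : T -> int) t0 w :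
  (forall t, t0 < t -> D t = 0%R) -> leads D w -> absL w <= t0.
Proof.
move=> top [_ w_sgn]; rewrite leNgt; apply/negP => lt_t0w.
have w0 : absL w != bot by rewrite gt_eqF // (le_lt_trans (le0x _) lt_t0w).
by move: (w_sgn w0); rewrite top //; case: (sgnL w); rewrite ltxx.
Qed.

Lemma charge_gap (x y : L) : leL x y -> x != y -> exists t0,
  [/\ t0 != bot, absL x <= t0, absL y <= t0 & (charge x t0 < charge y t0)%R].
Proof.
move=> le_xy neq_xy.
have [lt_xy | lt_yx | eq_xy] := ltgtP (absL x) (absL y).
- have y0 : absL y != bot by rewrite gt_eqF // (le_lt_trans (le0x _) lt_xy).
  exists (absL y); split; rewrite ?(ltW lt_xy) //.
  rewrite charge_neq ?(lt_eqF lt_xy) // charge_absL //.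
  by move: le_xy; rewrite /leL; case: (sgnL x); case: (sgnL y); rewrite // leNgt lt_xy.
- have x0 : absL x != bot by rewrite gt_eqF // (le_lt_trans (le0x _) lt_yx).
  exists (absL x); split; rewrite ?(ltW lt_yx) //.
  rewrite [charge y _]charge_neq ?(lt_eqF lt_yx) // charge_absL //.
  by move: le_xy; rewrite /leL; case: (sgnL x); case: (sgnL y); rewrite // leNgt lt_yx.
- have x0 : absL x != bot.
    apply: contra neq_xy => /eqP x0.
    by rewrite (absL_eq0 x0) (absL_eq0 (_ : absL y = bot)) // -eq_xy.
  exists (absL x); split; rewrite -?eq_xy //.
  rewrite charge_absL // {1}eq_xy charge_absL -?eq_xy //.
  move: le_xy neq_xy; rewrite /leL; case sx: (sgnL x); case sy: (sgnL y) => // _;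
  by rewrite (@eq_symL x y) ?sx ?sy ?eqxx.
Qed.

Lemma leads_mono (D D' : T -> int) (x y v w : L) :
  (forall t, D' t = D t - charge x t + charge y t)%R -> leL x y ->
  leads D v -> leads D' w -> leL v w.
Proof.
move=> DD' le_xy [v_top v_sgn] lw.
have [eq_xy | neq_xy] := eqVneq x y.
  have lv' : leads D' v by apply: (eq_leads _ (conj v_top v_sgn)) => t; rewrite DD' eq_xy subrK.
  by rewrite (leads_unique lv' lw) leL_refl.
have [t0 [t00 x_t0 y_t0 gap]] := charge_gap le_xy neq_xy.
have D'_top t : t0 < t -> D' t = D t.
  move=> lt_t0t; rewrite DD' !charge_neq ?subr0 ?addr0 //.
  - by rewrite lt_eqF // (le_lt_trans y_t0).
  - by rewrite lt_eqF // (le_lt_trans x_t0).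
have D'_t0 : (D t0 < D' t0)%R by rewrite DD' -addrA ltrDl addrC subr_gt0.
have w_posL : (0 < D' t0)%R -> (forall t, t0 < t -> D t = 0%R) -> w = posL t0.
  move=> pos top; apply: leads_unique lw (leads_posL t00 pos _) => t lt_t0t.
  by rewrite D'_top ?top.
have [lt_vt0 | lt_t0v | vt0] := ltgtP (absL v) t0.
- rewrite w_posL ?leL_posL ?(ltW lt_vt0) //; last by move=> t /(lt_trans lt_vt0)/v_top.
  by rewrite -(v_top _ lt_vt0).
- suff lv' : leads D' v by rewrite (leads_unique lv' lw) leL_refl.
  split=> [t lt_vt | v0]; first by rewrite D'_top ?v_top // (lt_trans lt_t0v).
  by rewrite D'_top //; apply: v_sgn.
- have v0 : absL v != bot by rewrite vt0.
  have top t : t0 < t -> D t = 0%R by rewrite -vt0 => /v_top.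
  move: (v_sgn v0); rewrite vt0; case sv: (sgnL v) => D_t0.
    rewrite (eq_negL sv vt0); apply: negL_leL; apply: leads_absL_le lw.
    by move=> t lt_t0t; rewrite D'_top ?top.
  by rewrite (w_posL (lt_trans D_t0 D'_t0) top) (eq_posL (negbT sv) vt0) leL_refl.
Qed.

Lemma leads_dominant (s : seq L) m : dominant s m -> leads (balance s) m.
Proof.
case/and4P=> m0 s_le m_s opp_s; split=> [t lt_mt | _].
  rewrite /balance big_seq big1 // => x x_s; rewrite charge_neq // lt_eqF //.
  exact: le_lt_trans (allP s_le x x_s) lt_mt.
have charge_s x : x \in s -> charge x (absL m) = 0%R \/ x = m.
  move=> x_s; have [xm | /charge_neq] := eqVneq (absL x) (absL m); last by left.
  by right; apply: contraNeq opp_s => /(eq_oppL m0 xm) <-.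
have charge_rem x : x \in rem m s ->
    charge x (absL m) = 0%R \/ charge x (absL m) = charge m (absL m).
  by move=> /mem_rem /charge_s [-> | ->]; [left | right].
rewrite charge_absL // in charge_rem.
rewrite /balance (perm_big _ (perm_to_rem m_s)) big_cons charge_absL //=.
rewrite big_seq; case: (sgnL m) in charge_rem * => /=.
- by apply: (ltr_wnDr _ (ltrN10 _)); apply: sumr_le0 => x /charge_rem [-> | ->].
- by apply: (ltr_wpDr _ ltr01); apply: sumr_ge0 => x /charge_rem [-> | ->].
Qed.

Lemma leads0 (D : T -> int) : (forall t, D t = 0%R) -> leads D zero.
Proof. by move=> D0; split=> [t _ | ]; rewrite ?absL0 ?eqxx. Qed.

Lemma leads_bigsym (s : seq L) : assocL s -> leads (balance s) (bigsym s).
Proof.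
move=> s_assoc; set t := maxabsL s.
have [t0 | t0] := eqVneq t bot.
  have s0 x : x \in s -> x = zero by apply: maxabsL_eq0.
  have -> : bigsym s = zero by case: (bigsym_mem s) => // /s0.
  by apply: leads0 => u; rewrite /balance big_seq big1 // => x /s0 ->; apply: charge0.
case pos_s: (posL t \in s); case neg_s: (negL t \in s).
- have [x ->] := assocL_balanced t0 (maxabsL_all s) pos_s neg_s s_assoc.
  rewrite !bigsym_cons symmaxx0 /symmax eqxx; apply: leads0 => u.
  by rewrite /balance !big_cons big_nil addr0 chargeN.
- have dom := dominant_posL t0 pos_s (negbT neg_s).
  by rewrite (bigsym_dominant dom); apply: leads_dominant.
- have dom := dominant_negL t0 neg_s (negbT pos_s).
  by rewrite (bigsym_dominant dom); apply: leads_dominant.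
- by move: (maxabsL_signed_mem t0); rewrite -/t pos_s neg_s.
Qed.

(** * The strong rule *)

Section StrongRule.
Variables (I : finType) (f : I -> L).

Definition balance_on (K : {set I}) (t : T) : int := (\sum_(i in K) charge (f i) t)%R.

Lemma balance_enum (K : {set I}) : balance (map f (enum K)) =1 balance_on K.
Proof. by move=> t; rewrite /balance big_map big_enum. Qed.

Lemma nonassocL_opposite (K : {set I}) i : ~~ assocL (map f (enum K)) ->
  i \in K -> f i = supL (map f (enum K)) -> exists2 j, j \in K :\ i & f j = oppL (f i).
Proof.
set s := map f (enum K); rewrite /assocL negb_or -ltnNge negbK => /andP[size_s /eqP sup_inf].
move=> iK fi; have s0 : s != [::] by rewrite -size_eq0 -lt0n (ltn_trans _ size_s).
have /mapP[j0 j0K fj0] := infL_mem s0; rewrite mem_enum in j0K.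
have inf_sup : infL s = oppL (supL s) by rewrite sup_inf oppLK.
(* If the infimum is attained only at i, then sup = inf = -sup is O. *)
have [j0i | j0i] := eqVneq j0 i; last by exists j0; rewrite ?inE ?j0i // -fj0 inf_sup fi.
rewrite {j0K}j0i in fj0.
have s_sup x : x \in s -> x = supL s.
  by move=> x_s; apply: leL_anti; rewrite ?supL_ub // -fi -fj0 infL_lb.
have : (0 < #|K :\ i|)%N.
  by move: size_s; rewrite size_map -cardE (cardsD1 i K) iK; lia.
case/card_gt0P => j jKi; exists j => //.
rewrite fi -inf_sup fj0 fi; apply: s_sup; apply: map_f.
by rewrite mem_enum; case/setD1P: jKi.
Qed.

Lemma strong_stepP (K : {set I}) : ~~ assocL (map f (enum K)) ->
  exists i j, [/\ i \in K, j \in K :\ i, f j = oppL (f i)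
                & strong_step f K = K :\ i :\ j].
Proof.
move=> K_nonassoc; rewrite /strong_step (negPf K_nonassoc).
set s := map f (enum K).
have s0 : s != [::] by apply: contraNneq K_nonassoc => s_nil; rewrite /assocL -/s s_nil.
case: pickP => [i /andP[iK /eqP fi] | no_sup]; last first.
  by have /mapP[i iK fi] := supL_mem s0; move: (no_sup i); rewrite -mem_enum iK -fi eqxx.
have [j jKi fj] := nonassocL_opposite K_nonassoc iK fi.
case: pickP => [j' /andP[j'K /andP[j'i /eqP fj']] | no_opp]; last first.
  by move: (no_opp j); case/setD1P: jKi => -> ->; rewrite fj fi eqxx.
by exists i, j'; rewrite fj' fi !inE j'i j'K.
Qed.

Lemma card_strong_step (K : {set I}) :
  ~~ assocL (map f (enum K)) -> (#|strong_step f K| + 2 = #|K|)%N.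
Proof.
case/strong_stepP=> i [j [iK jKi _ ->]].
by rewrite (cardsD1 i K) (cardsD1 j (K :\ i)) iK jKi; lia.
Qed.

Lemma balance_strong_step (K : {set I}) :
  balance_on (strong_step f K) =1 balance_on K.
Proof.
have [K_assoc | /strong_stepP[i [j [iK jKi fj ->]]]] := boolP (assocL (map f (enum K))).
  by rewrite /strong_step K_assoc.
move=> t; rewrite /balance_on [in RHS](big_setD1 i iK) [in RHS](big_setD1 j jKi) /=.
by rewrite fj addrA chargeN add0r.
Qed.

Lemma balance_iter_strong_step n :
  balance_on (iter n (strong_step f) setT) =1 balance_on setT.
Proof. by elim: n => //= n IH t; rewrite balance_strong_step IH. Qed.

Lemma iter_strong_step_assoc n (K := iter n (strong_step f) setT) :
  assocL (map f (enum K)) \/ (#|K| + 2 * n <= #|I|)%N.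
Proof.
rewrite {}/K; elim: n => [|n IH] /=; first by right; rewrite addn0 cardsT.
set K := iter n _ _ in IH *.
have [K_assoc | K_nonassoc] := boolP (assocL (map f (enum K))).
  by left; rewrite /strong_step K_assoc.
right; case: IH => [K_assoc | le_K]; first by rewrite K_assoc in K_nonassoc.
by rewrite mulnS addnA (card_strong_step K_nonassoc).
Qed.

(* Every non-trivial step deletes two indices, so #|I| steps suffice. *)
Lemma strong_rule_assoc : assocL (map f (enum (~: strong_rule f))).
Proof.
rewrite /strong_rule setCK; case: (iter_strong_step_assoc #|I|) => // le_K.
by rewrite /assocL size_map -cardE (_ : #|_| = 0%N) //; lia.
Qed.

Lemma leads_strong_rule : leads (balance_on setT) (rule_val (strong_rule f) f).
Proof.
apply: eq_leads (leads_bigsym strong_rule_assoc) => t.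
by rewrite balance_enum /strong_rule setCK balance_iter_strong_step.
Qed.

End StrongRule.

Lemma balance_on_update (I : finType) (f g : I -> L) k :
  (forall i, i != k -> g i = f i) ->
  forall t, (balance_on g setT t = balance_on f setT t - charge (f k) t + charge (g k) t)%R.
Proof.
move=> gf t; rewrite /balance_on [LHS](big_setD1 k) ?inE // [in RHS](big_setD1 k) ?inE //=.
under eq_bigr => i /setD1P[ik _] do rewrite gf //.
by rewrite [(charge (f k) t + _)%R]addrC addrK addrC.
Qed.

Lemma strong_rule_mono (I : finType) (a a' : I -> L) : (forall i, leL (a i) (a' i)) ->
  leL (rule_val (strong_rule a) a) (rule_val (strong_rule a') a').
Proof.
(* Replace the entries of a by those of a' one index at a time. *)
move=> le_a; pose mix (l : seq I) i := if i \in l then a' i else a i.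
suff mix_le l w : leads (balance_on (mix l) setT) w -> leL (rule_val (strong_rule a) a) w.
  apply: (mix_le (enum I)); apply: eq_leads (leads_strong_rule a') => t.
  by apply: eq_bigr => i _; rewrite /mix mem_enum.
elim: l w => [|k l IH] w lw.
  have la : leads (balance_on (mix [::]) setT) (rule_val (strong_rule a) a).
    by apply: eq_leads (leads_strong_rule a) => t; apply: eq_bigr.
  by rewrite (leads_unique la lw) leL_refl.
apply: leL_trans (IH _ (leads_strong_rule (mix l))) _.
apply: (leads_mono (x := mix l k) (y := mix (k :: l) k)) (leads_strong_rule (mix l)) lw.
  by apply: balance_on_update => i ik; rewrite /mix in_cons (negPf ik).
by rewrite /mix /= in_cons eqxx /=; case: ifP => _; [apply: leL_refl | apply: le_a].
Qed.

Lemma rule_val_split (I : finType) (f : I -> L) :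
  rule_val (split_rule f) f = split_value (map f (enum I)).
Proof.
rewrite /rule_val /split_rule -split_valueE; case: ifP => _.
  by rewrite setC0 enum_setT -enumT.
by rewrite setCT enum_set0.
Qed.

Lemma maxabsL_catfam (I J : finType) (a : I -> L) (b : J -> L) :
  maxabsL (map a (enum I)) <= maxabsL (map (catfam a b) (enum {: I + J})).
Proof.
rewrite {1}/maxabsL big_seq; apply: bigmax_le => [|x /mapP[i _ ->]]; first exact: le0x.
exact: (maxabsL_ub (mem_family (catfam a b) (inl i))).
Qed.

Lemma split_rule_cat (I J : finType) (a : I -> L) (b : J -> L) (c := catfam a b) :
  absL (rule_val (split_rule a) a) <= absL (rule_val (split_rule c) c) \/
  rule_val (split_rule c) c = zero.
Proof.
rewrite !rule_val_split; have [-> | c0] := eqVneq (split_value (map c (enum {: I + J}))) zero.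
  by right.
left; rewrite [X in _ <= X]absL_split_value //.
exact: le_trans (absL_split_value_le _) (maxabsL_catfam a b).
Qed.

Lemma evalt_in (I : Type) (lo hi : L) (a : I -> L) :
  (forall i, leL lo (a i) && leL (a i) hi) ->
  forall t : ptree I, leL lo (evalt a t) && leL (evalt a t) hi.
Proof. by move=> a_in; elim => //= l IHl r IHr; apply: symmax_in. Qed.

Lemma keptt_nil_in (I : Type) (lo hi : L) (a : I -> L) :
  (forall i, leL lo (a i) && leL (a i) hi) ->
  forall t : ptree I, keptt a t = [::] -> leL lo zero && leL zero hi.
Proof.
move=> a_in; elim => //= l IHl r IHr; case: eqP => [r_opp _ | _].
  by apply: zero_in_opp (evalt_in a_in l) _; rewrite -r_opp evalt_in.
by case: (keptt a l) IHl => // /(_ erefl).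
Qed.

Lemma comp_rule_bounded (rule : forall I : finType, (I -> L) -> {set I}) :
  is_comp_rule rule -> forall (I : finType) (a : I -> L),
  leL (infL (map a (enum I))) (rule_val (rule I a) a) &&
  leL (rule_val (rule I a) a) (supL (map a (enum I))).
Proof.
move=> rule_ok I a; have [_ rule_tree] := rule_ok I a; set s := map a (enum I).
have [s0 | s0] := eqVneq s [::].
  have I0 : #|I| = 0%N by apply/eqP; rewrite cardE -(size_map a) -/s size_eq0 s0.
  rewrite /rule_val (_ : ~: rule I a = set0) ?enum_set0 ?s0 ?leL_refl //.
  by apply/setP => i; move: (card0_eq I0 i); rewrite !inE.
have a_in i : leL (infL s) (a i) && leL (a i) (supL s).
  by rewrite infL_lb ?supL_ub ?mem_family.
case: rule_tree => [I0 | [t [_ ->]]].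
  by move: s0; rewrite -size_eq0 size_map -cardE I0.
rewrite /rule_val setCK; apply: bigsym_in => [x /mapP[i _ ->] // |].
case kept: (keptt a t) => [|i l]; first by right; apply: keptt_nil_in a_in t kept.
left; apply/eqP => /(congr1 (fun s => a i \in s)).
by rewrite map_f // mem_enum inE mem_head.
Qed.

End SymmetricMaximum.

Theorem proposition4 (d : Order.disp_t) (T : tbOrderType d) :
  (forall rule : forall I : finType, (I -> symL T) -> {set I},
     is_comp_rule rule ->
     forall (I : finType) (a : I -> symL T),
       leL (infL (map a (enum I))) (rule_val (rule I a) a) /\
       leL (rule_val (rule I a) a) (supL (map a (enum I)))) /\
  (forall (I : finType) (a a' : I -> symL T),
     (forall i, leL (a i) (a' i)) ->
     leL (rule_val (split_rule a) a) (rule_val (split_rule a') a') /\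
     leL (rule_val (strong_rule a) a) (rule_val (strong_rule a') a')) /\
  (forall (I J : finType) (a : I -> symL T) (b : J -> symL T),
     let c := catfam a b in
     (absL (rule_val (split_rule a) a) <= absL (rule_val (split_rule c) c))%O \/
     rule_val (split_rule c) c = zeroL T).
Proof.
split; first by move=> rule rule_ok I a; apply/andP; apply: comp_rule_bounded.
split; last by move=> I J a b; apply: split_rule_cat.
move=> I a a' le_a; split; last exact: strong_rule_mono.
by rewrite !rule_val_split; apply: split_value_mono.
Qed.
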